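(* Let $G$ be a finite graph with positive weights $w$ on its edges. For $i=1,\dots,k$ let $H_i$ be a subgraph of $G$ with positive weights $w_i$ on its edges, such that (i) there is a constant $m$ with $|\{i: x\in V(H_i)\}|=m$ for every $x\in V(G)$; and (ii) for every $e\in E(G)$, $w(e)\ge \frac1m\sum_{i:\,e\in E(H_i)} w_i(e)$. Then for all $t>0$, $$\frac{1}{|G|}\sum_{x\in V(G)}p_t(x;G)\le \frac{1}{\sum_{j=1}^k|H_j|}\sum_{i=1}^k\sum_{x\in V(H_i)}p_t(x;H_i).$$
   Context: For a graph $K$ with positive edge weights, its Laplacian $\Delta_K$ has off-diagonal entries $\Delta_K(x,y)=-w(e)$ when $e$ is the edge joining $x$ and $y$ with weight $w(e)$, all other off-diagonal entries $0$, and row sums $0$. $p_t(x;K)$, the probability that continuous-time random walk on the weighted graph $K$ started at $x$ is at $x$ at time $t$, is the $(x,x)$-entry of $e^{-t\Delta_K}$ (with $\Delta_{H_i}$ formed using the weights $w_i$). $|K|$ is the number of vertices. *)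

From HB Require Import structures.
From mathcomp Require Import all_boot all_order all_algebra.
From mathcomp Require Import all_classical all_reals all_analysis.
Set Implicit Arguments. Unset Strict Implicit. Unset Printing Implicit Defensive.
Import Order.TTheory GRing.Theory Num.Theory.
Local Open Scope ring_scope.

Section Heat.
Variable R : realType.

Definition mxid (T : finType) : T -> T -> R := fun x y => if x == y then 1 else 0.
Definition mxmul (T : finType) (A B : T -> T -> R) : T -> T -> R :=
  fun x y => \sum_(z : T) A x z * B z y.
Fixpoint mxpow (T : finType) (A : T -> T -> R) (n : nat) : T -> T -> R :=
  match n with O => @mxid T | S n => mxmul A (mxpow A n) end.

Definition wadj (T : finType) (E : rel T) (w : T -> T -> R) : T -> T -> R :=
  fun x y => if E x y then w x y else 0.

Definition laplacian (T : finType) (a : T -> T -> R) : T -> T -> R :=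
  fun x y => if x == y then \sum_(z | z != x) a x z else - a x y.

(* (x,x) entry of exp(-t L) via its defining power series, entrywise. *)
Definition heat_diag (T : finType) (a : T -> T -> R) (t : R) (x : T) : R :=
  limn (fun N : nat => \sum_(k < N) ((- t) ^+ k / (k`!)%:R) * mxpow (laplacian a) k x x).

Definition pt (T : finType) (E : rel T) (w : T -> T -> R) (t : R) (x : T) : R :=
  heat_diag (wadj E w) t x.

End Heat.

Definition subV (V : finType) (S : {set V}) : finType := {x : V | x \in S}.

Definition sub_rel (V : finType) (S : {set V}) (EH : rel V) : rel (subV S) :=
  fun a b => EH (val a) (val b).
Definition sub_w (R : realType) (V : finType) (S : {set V}) (wH : V -> V -> R)
  : subV S -> subV S -> R := fun a b => wH (val a) (val b).

From HB Require Import structures.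
From mathcomp Require Import all_boot all_order all_algebra.
From mathcomp Require Import all_classical all_reals all_analysis.
From mathcomp Require Import complex sesquilinear spectral.
From mathcomp Require Import ring lra.
Set Implicit Arguments. Unset Strict Implicit. Unset Printing Implicit Defensive.
Import Order.TTheory GRing.Theory Num.Theory numFieldNormedType.Exports.
Local Open Scope ring_scope.
Local Notation "x %:C" := (real_complex _ x) : ring_scope.

(* Diagonalize the Laplacians, L_G = sum_j lam_j v_j v_j^* and
   L_{H_i} = sum_s mu_s u_s u_s^*, so that the traces of the heat kernels are
   sum_j e^{-t lam_j} and sum_s e^{-t mu_s}.  With beta_{sj} = |<u_s, v_j|_{H_i}>|^2
   every row of beta sums to 1, so the tangent-line bound e^y >= e^x (1 + y - x)
   gives e^{-t mu_s} >= sum_j beta_{sj} e^{-t lam_j} (1 + t lam_j - t mu_s).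
   Summing over s, the column sums of beta are |v_j|_{H_i}|^2 and the mu-weighted
   ones are <v_j, L_{H_i} v_j>.  Summing over i, condition (i) turns the former
   into m and condition (ii) bounds the latter by m <v_j, L_G v_j> = m lam_j, so
   sum_i tr e^{-t L_{H_i}} >= m tr e^{-t L_G}; and sum_i |H_i| = m |G| by (i). *)

Section ComplexSqnorm.
Variable R : realType.
Local Notation C := R[i].

Definition sqnorm (z : C) : R := complex.Re (z * z^*).

Lemma sqnorm_ge0 (z : C) : 0 <= sqnorm z.
Proof. by have := mulcJ_ge0 z; rewrite lecE => /andP[]. Qed.

Lemma sqnorm_conj (z : C) : sqnorm z^* = sqnorm z.
Proof. by rewrite /sqnorm conjCK mulrC. Qed.

Lemma conj_realC (r : R) : r%:C^* = r%:C :> C.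
Proof. by apply: conj_Creal; apply/complex_realP; exists r. Qed.

Lemma ReD (x y : C) : complex.Re (x + y) = complex.Re x + complex.Re y.
Proof. by case: x; case: y. Qed.

Lemma Re_sum (I : Type) (r : seq I) (P : pred I) (F : I -> C) :
  complex.Re (\sum_(i <- r | P i) F i) = \sum_(i <- r | P i) complex.Re (F i).
Proof. exact: (big_morph _ ReD). Qed.

Lemma Re_realM (r : R) (z : C) : complex.Re (r%:C * z) = r * complex.Re z.
Proof. by case: z => a b /=; rewrite mul0r subr0. Qed.

End ComplexSqnorm.

Section Eigenbasis.
Variables (R : realType) (T J : finType).
Local Notation C := R[i].

Record orthonormal_basis (u : J -> T -> C) : Prop := OrthonormalBasis {
  basis_orthonormal : forall j l, \sum_x (u j x)^* * u l x = (j == l)%:R;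
  basis_complete : forall x y, \sum_j u j x * (u j y)^* = (x == y)%:R }.

Record eigendecomposition (M : T -> T -> R) (lam : J -> R) (u : J -> T -> C)
  : Prop := Eigendecomposition {
  eigen_basis : orthonormal_basis u;
  eigen_expansion : forall x y, (M x y)%:C = \sum_j (lam j)%:C * u j x * (u j y)^* }.

Definition coef (u : J -> T -> C) (f : T -> C) (j : J) : C := \sum_x (u j x)^* * f x.

Definition hform (M : T -> T -> R) (f : T -> C) : R :=
  complex.Re (\sum_x \sum_y (M x y)%:C * ((f x)^* * f y)).

Lemma sum_coef_quad (u : J -> T -> C) (c : J -> C) (f : T -> C) :
  \sum_j c j * (coef u f j * (coef u f j)^*)
  = \sum_x \sum_y (f x)^* * f y * \sum_j c j * u j x * (u j y)^*.
Proof.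
transitivity (\sum_j \sum_y \sum_x c j * ((u j y)^* * f y * ((u j x)^*^* * (f x)^*))).
  apply: eq_bigr => j _; rewrite /coef rmorph_sum big_distrlr mulr_sumr.
  by apply: eq_bigr => y _; rewrite mulr_sumr; apply: eq_bigr => x _; rewrite rmorphM.
under eq_bigr do rewrite exchange_big /=.
rewrite exchange_big /=; apply: eq_bigr => x _.
rewrite exchange_big /=; apply: eq_bigr => y _.
by rewrite mulr_sumr; apply: eq_bigr => j _; rewrite conjCK; ring.
Qed.

Section Basis.
Variable u : J -> T -> C.
Hypothesis hu : orthonormal_basis u.

Lemma parseval (f : T -> C) : \sum_j sqnorm (coef u f j) = \sum_x sqnorm (f x).
Proof.
rewrite /sqnorm -!Re_sum; congr complex.Re.
under eq_bigr do rewrite -[_ * _]mul1r.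
rewrite sum_coef_quad; apply: eq_bigr => x _.
under eq_bigr do (under eq_bigr do rewrite mul1r; rewrite basis_complete //).
rewrite (bigD1 x) //= eqxx mulr1 big1 ?addr0 ?[_ * f x]mulrC // => y /negPf.
by rewrite eq_sym => ->; rewrite mulr0.
Qed.

Lemma sum_sqnorm_basis j : \sum_x sqnorm (u j x) = 1.
Proof.
rewrite /sqnorm -Re_sum.
by under eq_bigr do rewrite mulrC; rewrite basis_orthonormal // eqxx.
Qed.

End Basis.

Section Eigen.
Variables (M : T -> T -> R) (lam : J -> R) (u : J -> T -> C).
Hypothesis hM : eigendecomposition M lam u.

Lemma hform_coef (f : T -> C) : hform M f = \sum_j lam j * sqnorm (coef u f j).
Proof.
under eq_bigr do rewrite -Re_realM.
rewrite -Re_sum sum_coef_quad; congr complex.Re.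
apply: eq_bigr => x _; apply: eq_bigr => y _.
by rewrite (eigen_expansion hM) mulrC.
Qed.

Lemma hform_eigen j : hform M (u j) = lam j.
Proof.
rewrite hform_coef (bigD1 j) //= big1 ?addr0 => [|l /negPf ljF].
  by rewrite /coef (basis_orthonormal (eigen_basis hM)) eqxx /sqnorm mul1r /= mulr1.
by rewrite /coef (basis_orthonormal (eigen_basis hM)) ljF /sqnorm mul0r mulr0.
Qed.

Lemma mxpow_expansion n x y :
  (mxpow M n x y)%:C = \sum_j (lam j)%:C ^+ n * u j x * (u j y)^*.
Proof.
have hu := eigen_basis hM.
elim: n x y => [|n IH] x y /=.
  under eq_bigr do rewrite expr0 mul1r.
  by rewrite (basis_complete hu) /mxid; case: (x == y).
rewrite /mxmul rmorph_sum /=.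
transitivity (\sum_z \sum_l \sum_j ((lam l)%:C * u l x * (u l z)^*) *
                ((lam j)%:C ^+ n * u j z * (u j y)^*)).
  by apply: eq_bigr => z _; rewrite rmorphM /= (eigen_expansion hM) IH big_distrlr.
rewrite exchange_big /=; apply: eq_bigr => l _.
transitivity (\sum_j ((lam l)%:C * u l x * ((lam j)%:C ^+ n * (u j y)^*)) *
                (l == j)%:R).
  rewrite exchange_big /=; apply: eq_bigr => j _.
  rewrite -(basis_orthonormal hu) mulr_sumr; apply: eq_bigr => z _; ring.
rewrite (bigD1 l) //= eqxx mulr1 big1 ?addr0; first by rewrite exprS; ring.
by move=> j /negPf; rewrite eq_sym => ->; rewrite mulr0.
Qed.

Lemma mxpow_diag n x : mxpow M n x x = \sum_j lam j ^+ n * sqnorm (u j x).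
Proof.
have -> : mxpow M n x x = complex.Re (mxpow M n x x)%:C by [].
rewrite mxpow_expansion Re_sum; apply: eq_bigr => j _.
by rewrite -rmorphXn -mulrA Re_realM.
Qed.

End Eigen.
End Eigenbasis.

Section Spectral.
Local Open Scope sesquilinear_scope.
Variables (R : realType) (T : finType).
Local Notation C := R[i].

Lemma symmetric_eigendecomposition (M : T -> T -> R) :
  (forall x y, M x y = M y x) ->
  exists (lam : 'I_#|T| -> R) (u : 'I_#|T| -> T -> C), eigendecomposition M lam u.
Proof.
move=> Msym.
pose A : 'M[C]_#|T| := \matrix_(i, j) (M (enum_val i) (enum_val j))%:C.
have Aherm : A \is hermsymmx.
  apply/is_hermitianmxP; rewrite expr0 scale1r; apply/matrixP => i j.
  by rewrite !mxE conj_realC Msym.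
have Areal := hermitian_spectral_diag_real Aherm.
have /orthomx_spectralP AE := hermitian_normalmx Aherm.
set P := spectralmx A in AE; set d := spectral_diag A in AE Areal.
have Pu : P \is unitarymx by apply: spectral_unitarymx.
have PPt : P *m P ^t* = 1%:M by apply/unitarymxP.
have PtP : P ^t* *m P = 1%:M.
  by rewrite -invmx_unitary // mulVmx // unitarymx_unit.
rewrite invmx_unitary // in AE.
have sum_rank (F : 'I_#|T| -> C) : \sum_x F (enum_rank x) = \sum_i F i.
  by rewrite (reindex (@enum_rank T)) //; apply: onW_bij; apply: enum_rank_bij.
exists (fun l => complex.Re (d 0 l)), (fun l x => (P l (enum_rank x))^*).
split; first split.
- move=> j l /=; under eq_bigr do rewrite conjCK.
  rewrite (sum_rank (fun i => P j i * (P l i)^*)).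
  move/matrixP: PPt => /(_ j l); rewrite !mxE => <-.
  by apply: eq_bigr => i _; rewrite !mxE.
- move=> x y /=; under eq_bigr do rewrite conjCK.
  move/matrixP: PtP => /(_ (enum_rank x) (enum_rank y)); rewrite !mxE.
  rewrite (inj_eq enum_rank_inj) => <-.
  by apply: eq_bigr => i _; rewrite !mxE.
- move=> x y /=.
  move/matrixP: AE => /(_ (enum_rank x) (enum_rank y)).
  rewrite mul_mx_diag !mxE !enum_rankK => ->.
  apply: eq_bigr => l _; rewrite !mxE.
  have : d 0 l \is Num.real by move/mxOverP: Areal; apply.
  by move/RRe_real => ->; rewrite conjCK [_ * d 0 l]mulrC.
Qed.

End Spectral.

Section HeatKernel.
Variable R : realType.
Local Notation C := R[i].

Lemma heat_diag_expansion (T J : finType) (a : T -> T -> R) (lam : J -> R)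
    (c : J -> T -> R) (t : R) (x : T) :
  (forall n, mxpow (laplacian a) n x x = \sum_j lam j ^+ n * c j x) ->
  heat_diag a t x = \sum_j c j x * expR (- t * lam j).
Proof.
move=> mxpowE; rewrite /heat_diag.
have -> : (fun N : nat => \sum_(n < N) ((- t) ^+ n / n`!%:R) * mxpow (laplacian a) n x x)
    = (fun N => \sum_j c j x * series (exp_coeff (- t * lam j)) N).
  apply: funext => N; under eq_bigr do rewrite mxpowE big_distrr.
  rewrite exchange_big /=; apply: eq_bigr => j _.
  rewrite /series /= big_mkord big_distrr /=; apply: eq_bigr => n _.
  rewrite exp_coeffE /= exprMn; lra.
apply: cvg_lim => //; apply: cvg_big => [|j _]; first exact: add_continuous.
by apply: cvgMl_tmp; apply: is_cvg_series_exp_coeff.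
Qed.

Lemma heat_trace (T J : finType) (a : T -> T -> R) (lam : J -> R) (u : J -> T -> C)
    (t : R) :
  eigendecomposition (laplacian a) lam u ->
  \sum_x heat_diag a t x = \sum_j expR (- t * lam j).
Proof.
move=> ha.
transitivity (\sum_x \sum_j sqnorm (u j x) * expR (- t * lam j)).
  apply: eq_bigr => x _.
  by apply: (heat_diag_expansion (c := fun j x => sqnorm (u j x))) => n; apply: mxpow_diag.
rewrite exchange_big /=; apply: eq_bigr => j _.
by rewrite -big_distrl /= (sum_sqnorm_basis (eigen_basis ha)) mul1r.
Qed.

End HeatKernel.

Section Laplacian.
Variables (R : realType) (T : finType) (a : T -> T -> R).
Hypothesis a_sym : forall x y, a x y = a y x.
Local Notation C := R[i].

Lemma laplacian_sym x y : laplacian a x y = laplacian a y x.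
Proof. by rewrite /laplacian eq_sym; case: eqP => [->|_] //; rewrite a_sym. Qed.

Lemma hform_laplacian (f : T -> C) :
  2 * hform (laplacian a) f = \sum_x \sum_y a x y * sqnorm (f x - f y).
Proof.
have E1 : \sum_x \sum_y (laplacian a x y)%:C * ((f x)^* * f y)
        = \sum_x \sum_y (a x y)%:C * ((f x)^* * (f x - f y)).
  apply: eq_bigr => x _.
  rewrite (bigD1 x) //= [RHS](bigD1 x) //= /laplacian eqxx subrr !mulr0 add0r.
  rewrite rmorph_sum big_distrl /= -big_split /=.
  apply: eq_bigr => y /negPf; rewrite eq_sym => ->; rewrite rmorphN /=; ring.
have E2 : \sum_x \sum_y (a x y)%:C * ((f x)^* * (f x - f y))
        = \sum_x \sum_y (a x y)%:C * ((f y)^* * (f y - f x)).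
  by rewrite exchange_big /=; apply: eq_bigr => x _; apply: eq_bigr => y _; rewrite a_sym.
rewrite /hform E1 mulr2n mulrDl mul1r -ReD {2}E2 -big_split /= Re_sum.
apply: eq_bigr => x _; rewrite -big_split /= Re_sum; apply: eq_bigr => y _.
by rewrite -Re_realM /sqnorm rmorphB /=; congr complex.Re; ring.
Qed.

End Laplacian.

Section Convexity.
Variable R : realType.

Lemma expR_tangent (x y : R) : expR x * (1 + (y - x)) <= expR y.
Proof.
rewrite -[in leRHS](subrK x y) expRD mulrC.
by apply: ler_wpM2r; [exact: expR_ge0 | exact: expR_ge1Dx].
Qed.

Lemma sum_expR_ge_tangent (S J : finType) (x : J -> R) (y : S -> R)
    (beta : S -> J -> R) :
  (forall s j, 0 <= beta s j) -> (forall s, \sum_j beta s j = 1) ->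
  \sum_j expR (x j) * \sum_s beta s j * (1 + (y s - x j)) <= \sum_s expR (y s).
Proof.
move=> beta_ge0 beta_row.
under [leRHS]eq_bigr => s _ do rewrite -[expR _]mul1r -(beta_row s) mulr_suml.
under [leLHS]eq_bigr do rewrite mulr_sumr.
rewrite exchange_big /=; apply: ler_sum => s _; apply: ler_sum => j _.
by rewrite mulrCA; apply: ler_wpM2l; [exact: beta_ge0 | exact: expR_tangent].
Qed.

End Convexity.

Section Restriction.
Variables (R : realType) (V : finType) (S : {set V}).
Local Notation C := R[i].

Lemma sum_subV {W : nmodType} (F : V -> W) :
  (forall x, x \notin S -> F x = 0) -> \sum_x F x = \sum_(y : subV S) F (val y).
Proof.
by move=> F0; rewrite (bigID (mem S)) /= [X in _ + X]big1 ?addr0 // (big_sub (mem S)).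
Qed.

Definition zero_ext (g : subV S -> C) (x : V) : C :=
  if insub x is Some y then g y else 0.

Lemma sum_zero_ext {W : nmodType} (F : V -> C -> W) (g : subV S -> C) :
  (forall x, F x 0 = 0) ->
  \sum_x F x (zero_ext g x) = \sum_(y : subV S) F (val y) (g y).
Proof.
move=> F0; rewrite (sum_subV (F := fun x => F x (zero_ext g x))) => [|x xS].
  by apply: eq_bigr => y _; rewrite /zero_ext valK.
by rewrite /zero_ext insubN.
Qed.

Lemma hform_laplacian_sub (c : V -> V -> R) (f : V -> C) :
  (forall x y, c x y = c y x) ->
  (forall x y, (x \notin S) || (y \notin S) -> c x y = 0) ->
  2 * hform (laplacian (fun y z : subV S => c (val y) (val z))) (fun y => f (val y))
  = \sum_x \sum_y c x y * sqnorm (f x - f y).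
Proof.
move=> c_sym c0; rewrite hform_laplacian => [|y z]; last exact: c_sym.
rewrite (sum_subV (F := fun x => \sum_y c x y * sqnorm (f x - f y))) => [|x xS].
  apply: eq_bigr => y _; rewrite (sum_subV (F := fun z => c (val y) z * _)) // => z zS.
  by rewrite c0 ?zS ?orbT ?mul0r.
by rewrite big1 // => y _; rewrite c0 ?xS ?mul0r.
Qed.

Variables (J : finType) (v : J -> V -> C).
Hypothesis hv : orthonormal_basis v.

Lemma heat_trace_sub_ge (b : subV S -> subV S -> R) (lam : J -> R) (t : R) :
  (forall y z, b y z = b z y) ->
  \sum_j expR (- t * lam j) *
    ((1 + t * lam j) * \sum_(y : subV S) sqnorm (v j (val y))
     - t * hform (laplacian b) (fun y => v j (val y)))
  <= \sum_(y : subV S) heat_diag b t y.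
Proof.
move=> b_sym.
have [mu [u hb]] := symmetric_eigendecomposition (laplacian_sym b_sym).
rewrite (heat_trace t hb).
pose beta s j := sqnorm (coef u (fun y => v j (val y)) s).
have beta_row s : \sum_j beta s j = 1.
  (* Parseval for the basis v, applied to u s extended by zero outside S. *)
  transitivity (\sum_j sqnorm (coef v (zero_ext (u s)) j)).
    apply: eq_bigr => j _; rewrite /beta -sqnorm_conj /coef rmorph_sum /=.
    rewrite (sum_zero_ext (F := fun x z => (v j x)^* * z)) => [|x]; last exact: mulr0.
    congr sqnorm; apply: eq_bigr => y _.
    by rewrite rmorphM /= conjCK mulrC.
  rewrite (parseval hv) (sum_zero_ext (F := fun _ => @sqnorm R)) => [|x].
    exact: (sum_sqnorm_basis (eigen_basis hb)).
  by rewrite /sqnorm mul0r.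
have beta_col j : \sum_s beta s j = \sum_(y : subV S) sqnorm (v j (val y)).
  exact: (parseval (eigen_basis hb)).
apply: le_trans (sum_expR_ge_tangent (fun j => - t * lam j) (fun s => - t * mu s)
  (fun s j => sqnorm_ge0 _) beta_row).
rewrite le_eqVlt; apply/orP; left; apply/eqP/eq_bigr => j _; congr (_ * _).
rewrite -beta_col (hform_coef hb) !mulr_sumr -sumrB.
by apply: eq_bigr => s _; rewrite /beta; ring.
Qed.

End Restriction.

Lemma wadj_sym (R : realType) (T : finType) (E : rel T) (w : T -> T -> R) :
  symmetric E -> (forall x y, E x y -> w x y = w y x) ->
  forall x y, wadj E w x y = wadj E w y x.
Proof.
move=> E_sym w_sym x y; rewrite /wadj E_sym.
by case: ifP => // Eyx; rewrite w_sym // E_sym.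
Qed.

Section Cover.
Variables (R : realType) (V : finType) (k m : nat) (VH : 'I_k -> {set V}).
Hypothesis cover : forall x, #|[set i | x \in VH i]| = m.

Lemma sum_cover (F : V -> R) :
  \sum_i \sum_(y : subV (VH i)) F (val y) = m%:R * \sum_x F x.
Proof.
under eq_bigr do rewrite -(big_sub (mem (VH _))) big_mkcond /=.
rewrite exchange_big mulr_sumr; apply: eq_bigr => x _.
by rewrite -big_mkcond sumr_const -cardsE cover mulr_natl.
Qed.

Lemma sum_card_cover : \sum_i #|VH i|%:R = m%:R * #|V|%:R :> R.
Proof.
have := sum_cover (fun=> 1); rewrite sumr_const => <-.
by apply: eq_bigr => i _; rewrite sumr_const card_sig.
Qed.

End Cover.

Section Subgraphs.
Variables (R : realType) (V : finType) (E : rel V) (w : V -> V -> R).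
Variables (k m : nat) (VH : 'I_k -> {set V}) (EH : 'I_k -> rel V).
Variables (wH : 'I_k -> V -> V -> R).
Hypothesis E_sym : symmetric E.
Hypothesis w_sym : forall x y, E x y -> w x y = w y x.
Hypothesis EH_sub : forall i x y, EH i x y -> [/\ E x y, x \in VH i & y \in VH i].
Hypothesis EH_sym : forall i, symmetric (EH i).
Hypothesis wH_sym : forall i x y, EH i x y -> wH i x y = wH i y x.
Hypothesis m_gt0 : (0 < m)%N.
Hypothesis cover : forall x, #|[set i | x \in VH i]| = m.
Hypothesis w_ge : forall x y, E x y -> w x y >= m%:R^-1 * \sum_(i | EH i x y) wH i x y.
Local Notation C := R[i].
Local Notation aH i := (wadj (@sub_rel V (VH i) (EH i)) (@sub_w R V (VH i) (wH i))).

Lemma sum_energy_le (g : V -> V -> R) : (forall x y, 0 <= g x y) ->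
  \sum_i \sum_x \sum_y wadj (EH i) (wH i) x y * g x y
  <= m%:R * \sum_x \sum_y wadj E w x y * g x y.
Proof.
move=> g_ge0; rewrite exchange_big mulr_sumr; apply: ler_sum => x _.
rewrite exchange_big mulr_sumr; apply: ler_sum => y _.
rewrite -big_distrl mulrA /= ler_wpM2r //.
rewrite /wadj -big_mkcond /=; case: ifPn => [Exy | NExy].
  by rewrite -ler_pdivrMl ?ltr0n // w_ge.
by rewrite big1 ?mulr0 // => i /EH_sub[Exy]; rewrite Exy in NExy.
Qed.

Lemma sum_subgraph_hform_le (f : V -> C) :
  \sum_i hform (laplacian (aH i)) (fun y => f (val y))
  <= m%:R * hform (laplacian (wadj E w)) f.
Proof.
have energyE i : 2 * hform (laplacian (aH i)) (fun y => f (val y))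
    = \sum_x \sum_y wadj (EH i) (wH i) x y * sqnorm (f x - f y).
  apply: (hform_laplacian_sub (c := wadj (EH i) (wH i))) => x y.
    exact: wadj_sym (EH_sym i) (@wH_sym i) x y.
  by rewrite /wadj; case: ifP => // /EH_sub[_ -> ->].
rewrite -(ler_pM2l (ltr0n R 2)) mulr_sumr mulrCA hform_laplacian; last exact: wadj_sym.
under eq_bigr do rewrite energyE.
by apply: sum_energy_le => x y; apply: sqnorm_ge0.
Qed.

Lemma heat_trace_cover_le (t : R) : 0 <= t ->
  m%:R * \sum_x pt E w t x
  <= \sum_i \sum_(y : subV (VH i)) pt (@sub_rel V (VH i) (EH i)) (@sub_w R V (VH i) (wH i)) t y.
Proof.
move=> t_ge0.
have [lam [v hG]] := symmetric_eigendecomposition (laplacian_sym (wadj_sym E_sym w_sym)).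
have hv := eigen_basis hG.
have block i := heat_trace_sub_ge (S := VH i) (b := aH i) hv lam t
  (fun y z => wadj_sym (EH_sym i) (@wH_sym i) (val y) (val z)).
apply: le_trans (ler_sum _ (fun i _ => block i)).
rewrite /pt (heat_trace t hG) exchange_big mulr_sumr; apply: ler_sum => j _.
rewrite -mulr_sumr [leLHS]mulrC ler_wpM2l ?expR_ge0 // sumrB -!mulr_sumr.
rewrite (sum_cover cover (fun x => sqnorm (v j x))) (sum_sqnorm_basis hv) mulr1.
have := ler_wpM2l t_ge0 (sum_subgraph_hform_le (v j)).
rewrite (hform_eigen hG); lra.
Qed.

End Subgraphs.

Unset Implicit Arguments.

Theorem theorem4p2 (R : realType) (V : finType) (E : rel V) (w : V -> V -> R)
  (k : nat) (VH : 'I_k -> {set V}) (EH : 'I_k -> rel V) (wH : 'I_k -> V -> V -> R)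
  (m : nat) (t : R) :
  (* G is a finite simple graph with positive symmetric edge weights *)
  irreflexive E -> symmetric E ->
  (forall x y, E x y -> 0 < w x y) -> (forall x y, E x y -> w x y = w y x) ->
  (* each H_i is a subgraph of G with positive symmetric edge weights *)
  (forall i x y, EH i x y -> [/\ E x y, x \in VH i & y \in VH i]) ->
  (forall i, symmetric (EH i)) ->
  (forall i x y, EH i x y -> 0 < wH i x y) ->
  (forall i x y, EH i x y -> wH i x y = wH i y x) ->
  (* (i) *)
  (0 < m)%N ->
  (forall x : V, #|[set i | x \in VH i]| = m) ->
  (* (ii) *)
  (forall x y, E x y -> w x y >= (m%:R)^-1 * \sum_(i | EH i x y) wH i x y) ->
  0 < t ->
  (#|V|%:R)^-1 * \sum_(x : V) pt E w t x
    <= (\sum_(j < k) #|VH j|%:R)^-1 *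
       \sum_(i < k) \sum_(a : subV (VH i)) pt (@sub_rel V (VH i) (EH i)) (@sub_w R V (VH i) (wH i)) t a.
Proof.
move=> _ E_sym _ w_sym EH_sub EH_sym _ wH_sym m_gt0 cover w_ge t_gt0.
rewrite (sum_card_cover R cover) invfM [_^-1 * #|V|%:R^-1]mulrC -mulrA.
rewrite ler_wpM2l ?invr_ge0 ?ler0n // ler_pdivlMl ?ltr0n //.
exact: heat_trace_cover_le (ltW t_gt0).
Qed.
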